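(* Let $r>0$ and $k\geq1$ be an integer. Let $\mathcal N=(G,\beta,r)$ be a multi-path network of length $k$ (nodes $v_0,\dots,v_k$, every arc joins two consecutive nodes $v_{i-1},v_i$), and let $s=v_0$, $t=v_k$. Let $(\pi,f)$ be a potential-based $(s,t)$-flow of value $d>0$ in $\mathcal N$. If $\pi\in[0,\bar\pi]^V$ for some $\bar\pi>0$, then $$U^{\mathcal N}_{s,t}\geq \frac{d}{\sqrt[r]{\bar\pi}}.$$
   Context: A potential-based flow network $\mathcal N=(G,\beta,r)$ consists of a weakly connected directed multigraph $G=(V,A)$ without loops, resistances $\beta\in\mathbb{R}^A_{>0}$ and a degree $r>0$. For a balanced vector $b\in\mathbb{R}^V$ (i.e. $\sum_v b_v=0$), a potential-based $b$-transshipment is a pair $(\pi,f)\in\mathbb{R}^V\times\mathbb{R}^A$ with $\pi_u-\pi_v=\beta_a\,\mathrm{sign}(f_a)|f_a|^r$ for every arc $a=(u,v)$ and $\sum_{a\in\delta^+(v)}f_a-\sum_{a\in\delta^-(v)}f_a=b_v$ for all $v\in V$ ($\delta^+(v)$, $\delta^-(v)$: arcs leaving, resp. entering, $v$). A potential-based $(s,t)$-flow of value $d$ is a potential-based $b$-transshipment with $b=d(\chi_s-\chi_t)$, $\chi_v$ the unit vector of $v$. Such pairs exist for every balanced $b$ and are unique up to adding a constant to $\pi$; let $\pi^{\mathcal N}(b)$ be the potential normalized to have minimum entry $0$. The effective resistance is $R^{\mathcal N}_{s,t}=\pi^{\mathcal N}_s(\chi_s-\chi_t)-\pi^{\mathcal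 N}_t(\chi_s-\chi_t)$ and the effective conductance is $U^{\mathcal N}_{s,t}=(R^{\mathcal N}_{s,t})^{-1/r}$. *)

From HB Require Import structures.
From mathcomp Require Import all_boot all_order all_algebra.
From mathcomp Require Import all_classical all_reals all_analysis.
From Stdlib Require Import ClassicalEpsilon.
Set Implicit Arguments. Unset Strict Implicit. Unset Printing Implicit Defensive.
Import Order.TTheory GRing.Theory Num.Theory.
Local Open Scope ring_scope.

Section Defs.
Variables (R : realType) (V A : finType) (tl hd : A -> V).

Definition und_adj : rel V :=
  fun u v => [exists a, ((tl a == u) && (hd a == v)) || ((tl a == v) && (hd a == u))].

Definition weakly_connected : Prop := forall u v : V, connect und_adj u v.

Definition loopless : Prop := forall a : A, tl a != hd a.

Definition pb_network (beta : A -> R) (r : R) : Prop :=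
  [/\ loopless, weakly_connected, (forall a, 0 < beta a) & 0 < r].

Definition balanced (b : V -> R) : Prop := \sum_(v : V) b v = 0.

Definition chi (s : V) : V -> R := fun v => (v == s)%:R.

Definition pb_transshipment (beta : A -> R) (r : R) (b : V -> R)
  (pi : V -> R) (f : A -> R) : Prop :=
  (forall a : A, pi (tl a) - pi (hd a) = beta a * (Num.sg (f a) * (`|f a| `^ r)))
  /\ (forall v : V, \sum_(a | tl a == v) f a - \sum_(a | hd a == v) f a = b v).

Definition pb_st_flow (beta : A -> R) (r : R) (s t : V) (d : R)
  (pi : V -> R) (f : A -> R) : Prop :=
  pb_transshipment beta r (fun v => d * (chi s v - chi t v)) pi f.

(* the normalized potential pi^N(b): a potential of a potential-based
   b-transshipment whose minimum entry is 0 (unique by the standard theory) *)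
Definition norm_pot (beta : A -> R) (r : R) (b : V -> R) : V -> R :=
  epsilon (inhabits (fun _ : V => 0))
    (fun pi => (exists f, pb_transshipment beta r b pi f)
               /\ (forall v, 0 <= pi v) /\ (exists v, pi v = 0)).

Definition eff_res (beta : A -> R) (r : R) (s t : V) : R :=
  norm_pot beta r (fun v => chi s v - chi t v) s
  - norm_pot beta r (fun v => chi s v - chi t v) t.

Definition eff_cond (beta : A -> R) (r : R) (s t : V) : R :=
  eff_res beta r s t `^ (- r^-1).

End Defs.

Definition multi_path (k : nat) (A : finType) (tl hd : A -> 'I_k.+1) : Prop :=
  forall a : A, (nat_of_ord (hd a) = (tl a).+1)%N \/ (nat_of_ord (tl a) = (hd a).+1)%N.

From mathcomp Require Import all_boot all_order all_algebra.
From mathcomp Require Import all_classical all_reals all_analysis.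
From mathcomp Require Import ring lra.
From Stdlib Require Import ClassicalEpsilon.

Set Implicit Arguments.
Unset Strict Implicit.
Unset Printing Implicit Defensive.
Import Order.TTheory GRing.Theory Num.Theory.
Local Open Scope ring_scope.

(** Scaling (pi, f) by 1/d gives a unit (s,t)-flow with potential d^-r pi.
  Potential differences of potential-based transshipments are unique: as
  x |-> sg x |x|^r is strictly increasing, the pairing
  sum_v (p v - p' v) (b v - b' v) of two solutions is a sum over the arcs of
  nonnegative terms that vanish only where the two flows agree.  Hence
  R_{s,t} = d^-r (pi_s - pi_t), i.e. U_{s,t} = d / (pi_s - pi_t)^(1/r), while
  pi_s - pi_t <= pibar; pairing with the zero flow shows pi_s - pi_t > 0. *)

Section SignedPower.
Variables (R : realType) (r : R).
Hypothesis r_gt0 : 0 < r.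

Definition spowR (x : R) : R := Num.sg x * `|x| `^ r.

Lemma spowR0 : spowR 0 = 0.
Proof. by rewrite /spowR sgr0 mul0r. Qed.

Lemma spowRN x : spowR (- x) = - spowR x.
Proof. by rewrite /spowR sgrN normrN mulNr. Qed.

Lemma ge0_spowR x : 0 <= x -> spowR x = x `^ r.
Proof.
rewrite le_eqVlt => /predU1P[<-|x_gt0]; first by rewrite spowR0 powR0 ?gt_eqF.
by rewrite /spowR gtr0_sg // gtr0_norm // mul1r.
Qed.

Lemma spowRMl c x : 0 < c -> spowR (c * x) = c `^ r * spowR x.
Proof.
move=> c_gt0; rewrite /spowR sgrM gtr0_sg // mul1r normrM gtr0_norm //.
by rewrite powRM ?normr_ge0 ?ltW // mulrCA.
Qed.

Lemma spowR_ltr : {homo spowR : x y / x < y}.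
Proof.
have ltr_nneg x y : 0 <= x -> x < y -> spowR x < spowR y.
  move=> x_ge0 xy; have y_ge0 := le_trans x_ge0 (ltW xy).
  by rewrite !ge0_spowR //; apply: gt0_ltr_powR; rewrite ?nnegrE.
move=> x y xy; have [x_ge0|x_lt0] := leP 0 x; first exact: ltr_nneg.
have spowR_x_lt0 : spowR x < 0.
  rewrite -[x]opprK spowRN ge0_spowR ?oppr_ge0 ?ltW //.
  by rewrite oppr_lt0 powR_gt0 ?oppr_gt0.
have [y_ge0|y_lt0] := leP 0 y.
  by apply: (lt_le_trans spowR_x_lt0); rewrite ge0_spowR ?powR_ge0.
have := ltr_nneg (- y) (- x); rewrite !spowRN !ltrN2.
by apply; rewrite // oppr_ge0 ltW.
Qed.

Lemma subr_mul_spowR_gt0 x y : x != y -> 0 < (x - y) * (spowR x - spowR y).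
Proof.
case: (ltgtP x y) => // [xy|yx] _; last first.
  by apply: mulr_gt0; rewrite subr_gt0 //; apply: spowR_ltr.
by rewrite -mulrNN !opprB; apply: mulr_gt0; rewrite subr_gt0 //; apply: spowR_ltr.
Qed.

Lemma subr_mul_spowR_ge0 x y : 0 <= (x - y) * (spowR x - spowR y).
Proof.
by have [->|/subr_mul_spowR_gt0/ltW//] := eqVneq x y; rewrite subrr mul0r.
Qed.

End SignedPower.

Section Network.
Variables (R : realType) (V A : finType) (tl hd : A -> V).

Definition outflow (g : A -> R) (v : V) : R :=
  \sum_(a | tl a == v) g a - \sum_(a | hd a == v) g a.

Lemma outflowB g g' v :
  outflow (fun a => g a - g' a) v = outflow g v - outflow g' v.
Proof. by rewrite /outflow !sumrB; ring. Qed.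

Lemma sum_drop_outflow (q : V -> R) (g : A -> R) :
  \sum_a g a * (q (tl a) - q (hd a)) = \sum_v q v * outflow g v.
Proof.
have sum_end (e : A -> V) (h : A -> R) :
    \sum_a h a * q (e a) = \sum_v q v * \sum_(a | e a == v) h a.
  rewrite (partition_big e xpredT) //=; apply: eq_bigr => v _.
  by rewrite mulr_sumr; apply: eq_bigr => a /eqP->; rewrite mulrC.
under eq_bigr do rewrite mulrBr.
by rewrite sumrB !sum_end -sumrB; apply: eq_bigr => v _; rewrite mulrBr.
Qed.

Lemma sum_mul_chi (q : V -> R) (s : V) : \sum_v q v * chi R s v = q s.
Proof.
rewrite (bigD1 s) //= /chi eqxx mulr1 big1 ?addr0 // => v /negbTE->.
by rewrite mulr0.
Qed.

Variables (beta : A -> R) (r : R).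
Hypotheses (beta_gt0 : forall a, 0 < beta a) (r_gt0 : 0 < r).

Local Notation transshipment := (pb_transshipment tl hd beta r).

Lemma zero_pb_transshipment : transshipment (fun=> 0) (fun=> 0) (fun=> 0).
Proof.
split=> [a|v]; first by rewrite subrr sgr0 mul0r mulr0.
by rewrite !big1 ?subrr.
Qed.

Section Pairing.
Variables (b b' p p' : V -> R) (g g' : A -> R).
Hypotheses (Tg : transshipment b p g) (Tg' : transshipment b' p' g').

Lemma pb_transshipment_pairingE :
  \sum_v (p v - p' v) * (b v - b' v) =
  \sum_a beta a * ((g a - g' a) * (spowR r (g a) - spowR r (g' a))).
Proof.
case: Tg Tg' => [pot cons] [pot' cons'].
under eq_bigr do rewrite -cons -cons' -outflowB.
rewrite -sum_drop_outflow; apply: eq_bigr => a _.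
have -> : p (tl a) - p' (tl a) - (p (hd a) - p' (hd a)) =
          (p (tl a) - p (hd a)) - (p' (tl a) - p' (hd a)) by ring.
by rewrite pot pot' /spowR; ring.
Qed.

Let arc_pairing_ge0 a :
  0 <= beta a * ((g a - g' a) * (spowR r (g a) - spowR r (g' a))).
Proof. by apply: mulr_ge0; [exact: ltW | exact: subr_mul_spowR_ge0]. Qed.

Lemma pb_transshipment_pairing_ge0 : 0 <= \sum_v (p v - p' v) * (b v - b' v).
Proof. by rewrite pb_transshipment_pairingE sumr_ge0. Qed.

Lemma pb_transshipment_pairing_eq0 :
  \sum_v (p v - p' v) * (b v - b' v) = 0 -> g =1 g'.
Proof.
rewrite pb_transshipment_pairingE.
move=> /psumr_eq0P-/(_ (fun a _ => arc_pairing_ge0 a)) arc0 a.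
move/eqP: (arc0 a isT); rewrite mulf_eq0 gt_eqF //=.
by have [//|/(subr_mul_spowR_gt0 r_gt0)/gt_eqF->] := eqVneq (g a) (g' a).
Qed.

End Pairing.

Lemma pb_transshipment_potential_uniq b p p' g g' :
  weakly_connected tl hd ->
  transshipment b p g -> transshipment b p' g' ->
  forall u v, p u - p v = p' u - p' v.
Proof.
move=> conn Tg Tg' u v.
have g_eq : g =1 g'.
  apply: (pb_transshipment_pairing_eq0 Tg Tg').
  by rewrite big1 // => w _; rewrite subrr mulr0.
have arc_eq a : p (tl a) - p' (tl a) = p (hd a) - p' (hd a).
  have := Tg.1 a; rewrite g_eq -Tg'.1; lra.
have closed_level :
    fingraph.closed (und_adj tl hd) [pred w | p w - p' w == p u - p' u].
  by move=> x y /existsP[a /orP[] /andP[/eqP<- /eqP<-]]; rewrite !inE arc_eq.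
have := closed_connect closed_level (conn u v); rewrite !inE eqxx => /esym/eqP.
lra.
Qed.

Lemma pb_transshipment_shift b p g c :
  transshipment b p g -> transshipment b (fun v => p v + c) g.
Proof. by case=> pot cons; split=> // a; rewrite -pot; ring. Qed.

Lemma pb_transshipment_scale b p g c : 0 < c ->
  transshipment b p g ->
  transshipment (fun v => c * b v) (fun v => c `^ r * p v) (fun a => c * g a).
Proof.
move=> c_gt0 [pot cons]; split=> [a|v].
  by rewrite -mulrBr pot -/(spowR r (g a)) -/(spowR r (c * g a)) spowRMl // mulrCA.
by rewrite -cons -!mulr_sumr -mulrBr.
Qed.

Lemma norm_pot_spec (v0 : V) b p g : transshipment b p g ->
  exists g', transshipment b (norm_pot tl hd beta r b) g'.
Proof.
move=> Tg; rewrite /norm_pot; set P := (fun pi => _ /\ _).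
suff /(epsilon_spec (inhabits (fun=> 0))) [] : exists pi, P pi by [].
have [/= v_min _ p_min] := @arg_minP _ _ _ v0 xpredT p isT.
exists (fun v => p v + - p v_min); split; last split.
- by exists g; apply: pb_transshipment_shift.
- by move=> v; rewrite subr_ge0 p_min.
- by exists v_min; rewrite subrr.
Qed.

Lemma eff_res_unit_flow s t p g : weakly_connected tl hd ->
  transshipment (fun v => chi R s v - chi R t v) p g ->
  eff_res tl hd beta r s t = p s - p t.
Proof.
move=> conn Tg; have [g' Tg'] := norm_pot_spec s Tg.
exact: pb_transshipment_potential_uniq Tg' Tg s t.
Qed.

Section StFlow.
Variables (s t : V) (d : R) (p : V -> R) (g : A -> R).
Hypotheses (d_gt0 : 0 < d) (st_flow : pb_st_flow tl hd beta r s t d p g).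

Lemma st_flow_potential_drop_gt0 : s != t -> 0 < p s - p t.
Proof.
move=> st_neq.
have pairing :
    \sum_v (p v - 0) * (d * (chi R s v - chi R t v) - 0) = d * (p s - p t).
  under eq_bigr do rewrite !subr0 mulrCA mulrBr.
  by rewrite -mulr_sumr sumrB !sum_mul_chi.
rewrite -(pmulr_rgt0 _ d_gt0) -pairing lt_def.
rewrite (pb_transshipment_pairing_ge0 st_flow zero_pb_transshipment) andbT.
apply/eqP => /(pb_transshipment_pairing_eq0 st_flow zero_pb_transshipment) g0.
have := st_flow.2 s; rewrite !big1 => [|a _|a _]; rewrite ?g0 // subrr.
by rewrite /chi eqxx (negbTE st_neq) subr0 mulr1 => /eqP; rewrite eq_sym gt_eqF.
Qed.

Lemma eff_res_st_flow : weakly_connected tl hd ->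
  eff_res tl hd beta r s t = d `^ (- r) * (p s - p t).
Proof.
move=> conn.
have unit_flow : transshipment (fun v => chi R s v - chi R t v)
    (fun v => d^-1 `^ r * p v) (fun a => d^-1 * g a).
  have -> : (fun v => chi R s v - chi R t v) =
            (fun v => d^-1 * (d * (chi R s v - chi R t v))).
    by apply/funext => v; rewrite mulKf ?gt_eqF.
  by apply: pb_transshipment_scale; rewrite ?invr_gt0.
rewrite (eff_res_unit_flow conn unit_flow) -mulrBr.
by rewrite -powR_inv1 ?ltW // -powRrM mulN1r.
Qed.

Lemma eff_cond_st_flow : weakly_connected tl hd -> s != t ->
  eff_cond tl hd beta r s t = d / (p s - p t) `^ r^-1.
Proof.
move=> conn st_neq; have drop_gt0 := st_flow_potential_drop_gt0 st_neq.
rewrite /eff_cond eff_res_st_flow // powRM ?powR_ge0 ?ltW //.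
by rewrite -powRrM mulrNN mulfV ?gt_eqF // powRr1 ?ltW // powRN.
Qed.

End StFlow.

End Network.

Theorem lemma3 (R : realType) (r : R) (k : nat) (A : finType)
  (tl hd : A -> 'I_k.+1) (beta : A -> R) (d pibar : R)
  (pi : 'I_k.+1 -> R) (f : A -> R) :
  (1 <= k)%N ->
  pb_network tl hd beta r ->
  multi_path tl hd ->
  pb_st_flow tl hd beta r ord0 ord_max d pi f ->
  0 < d ->
  0 < pibar ->
  (forall v, 0 <= pi v <= pibar) ->
  eff_cond tl hd beta r ord0 ord_max >= d / pibar `^ r^-1.
Proof.
move=> k_gt0 [_ conn beta_gt0 r_gt0] _ st_flow d_gt0 pibar_gt0 pi_bound.
have st_neq : ord0 != ord_max :> 'I_k.+1.
  by apply/eqP => /(congr1 val) /= k0; rewrite -k0 in k_gt0.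
have drop_gt0 := st_flow_potential_drop_gt0 beta_gt0 r_gt0 d_gt0 st_flow st_neq.
rewrite (eff_cond_st_flow beta_gt0 r_gt0 d_gt0 st_flow conn st_neq).
have drop_le : pi ord0 - pi ord_max <= pibar.
  by move: (pi_bound ord0) (pi_bound ord_max) => /andP[_ ?] /andP[? _]; lra.
rewrite ler_pM2l // lef_pV2 ?posrE ?powR_gt0 //.
by apply: ge0_ler_powR => //; rewrite ?nnegrE ?invr_ge0 ltW.
Qed.
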